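(* Let $V$ be a finite set of variables and let $D_{\mathit{dag}}$ be the ABA framework defined in the context. Then the set of preferred extensions of $D_{\mathit{dag}}$ equals the set of stable extensions of $D_{\mathit{dag}}$.
   Context: Assumption-based argumentation (ABA). An ABA framework (ABAF) is a tuple $D=(\mathcal L,\mathcal R,\mathcal A,\overline{\cdot})$ where $\mathcal L$ is a set of sentences, $\mathcal R$ is a set of rules $a_0\leftarrow a_1,\dots,a_n$ ($n\ge 0$), $\mathcal A\subseteq\mathcal L$ is a set of assumptions and $\overline{\cdot}:\mathcal A\to\mathcal L$ is the contrary function. For $S\subseteq\mathcal A$, $S\vdash q$ if there is a finite rooted labelled tree whose root is labelled $q$, whose set of leaf labels is $S$ or $S\cup\{\top\}$, and in which every inner node is labelled $\mathrm{head}(r)$ for some $r\in\mathcal R$ with children labelled by the distinct elements of $\mathrm{body}(r)$ (or a single child $\top$ if the body is empty). $S$ attacks $T\subseteq\mathcal A$ if there are $S'\subseteq S$ and $a\in T$ with $S'\vdash\overline a$. $S$ is conflict-free if it does not attack itself; $S$ defends $T$ if $S$ attacks every set of assumptions attacking $T$; admissible if conflict-free and it defends itself; complete if admissible and it contains every assumption set it defends; preferred if $\subseteq$-maximal among complete sets; stable if admissible and it attacks $\{a\}$ for every $a\in\mathcal A\setminus S$. The framework $D_{\mathit{dag}}$: for a finite set $V$ of variables, assumptions are $\mathit{arr}_{xy}$ for all ordered pairs $x\neq y$ in $V$ and one assumption $\mathit{noe}_{xy}=\mathit{noe}_{yx}$ per unordered pair of distinct variables; each assumption $a$ has its own distinct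 fresh contrary $\overline a$; rules are (i) $\overline a\leftarrow b$ for all distinct $a,b\in\{\mathit{arr}_{xy},\mathit{arr}_{yx},\mathit{noe}_{xy}\}$; (ii) for each sequence $x_1\dots x_k$ of variables with consecutive elements distinct and $x_1=x_k$, and each $1\le i<k$, the rule $\overline{\mathit{arr}_{x_ix_{i+1}}}\leftarrow \mathit{arr}_{x_1x_2},\dots,\mathit{arr}_{x_{k-1}x_k}$. *)

From HB Require Import structures.
From mathcomp Require Import all_boot.
Set Implicit Arguments. Unset Strict Implicit. Unset Printing Implicit Defensive.

(** The rules are given as a predicate on pairs (head, body), the body being
    a finite set of sentences (children are labelled by the DISTINCT elements
    of the body, so only the set of body elements matters). *)
Record ABAF (L : finType) := MkABAF {
  rule : L -> {set L} -> Prop;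
  assm : {set L};
  contrary : L -> L   (* only relevant on assm *)
}.

Section ABA.
Variables (L : finType) (D : ABAF L).

(** [dtree q U]: there is a finite rooted labelled tree with root labelled q,
    whose set of leaf labels (other than the top symbol) is U, each leaf being
    an assumption (or top, the child of an empty-body rule) and each inner node
    labelled head(r) with one child per element of body(r). *)
Inductive dtree : L -> {set L} -> Prop :=
| DLeaf a : a \in assm D -> dtree a [set a]
| DNode q (B : {set L}) (U : L -> {set L}) :
    rule D q B -> (forall b, b \in B -> dtree b (U b)) ->
    dtree q (\bigcup_(b in B) U b).

Definition derives (S : {set L}) (q : L) : Prop := dtree q S.

Definition attacks (S T : {set L}) : Prop :=
  exists2 S' : {set L}, S' \subset S & exists2 a : L, a \in T & derives S' (contrary D a).

Definition conflict_free (S : {set L}) : Prop := ~ attacks S S.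

Definition defends (S T : {set L}) : Prop :=
  forall U : {set L}, U \subset assm D -> attacks U T -> attacks S U.

Definition admissible (S : {set L}) : Prop :=
  [/\ S \subset assm D, conflict_free S & defends S S].

Definition complete (S : {set L}) : Prop :=
  admissible S /\ (forall T : {set L}, T \subset assm D -> defends S T -> T \subset S).

Definition preferred (S : {set L}) : Prop :=
  complete S /\ (forall T : {set L}, complete T -> S \subset T -> T = S).

Definition stable (S : {set L}) : Prop :=
  admissible S /\
  (forall a, a \in assm D -> a \notin S -> attacks S [set a]).

End ABA.

Section Dag.
Variable V : finType.

(** Assumption atoms: inl (x,y) = arr_xy (x != y); inr s = noe_xy with s = {x,y}
    an unordered pair of distinct variables. *)
Definition dag_atom_ok (p : ((V * V) + {set V})%type) : bool :=
  match p with inl (x, y) => x != y | inr s => #|s| == 2 end.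

Definition datom := {p : ((V * V) + {set V})%type | dag_atom_ok p}.

(** Sentences: inl a = the assumption a; inr a = its (fresh) contrary. *)
Definition dsent := (datom + datom)%type.

Definition in_triple (x y : V) (a : datom) : Prop :=
  val a = inl (x, y) \/ val a = inl (y, x) \/ val a = inr [set x; y].

Definition dag_rule_i (q : dsent) (B : {set dsent}) : Prop :=
  exists x y (a b : datom),
    [/\ x != y, in_triple x y a, in_triple x y b & a != b] /\
    q = inr a /\ B = [set inl b].

(** rules (ii): for a sequence x_1 ... x_k (here x :: t, k = size t + 1) with
    consecutive elements distinct and x_1 = x_k, and each 1 <= i < k:
    contrary(arr_{x_i x_(i+1)}) <- arr_{x_1 x_2}, ..., arr_{x_(k-1) x_k}. *)
Definition dag_rule_ii (q : dsent) (B : {set dsent}) : Prop :=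
  exists (x : V) (t : seq V) (i : nat) (a : datom),
    [/\ path (fun u v => u != v) x t, last x t = x, i < size t,
        val a = inl (nth x (x :: t) i, nth x (x :: t) i.+1) &
        q = inr a] /\
        (forall c, c \in B <->
          exists j, j < size t /\ exists a' : datom,
            c = inl a' /\ val a' = inl (nth x (x :: t) j, nth x (x :: t) j.+1)).

Definition Ddag : ABAF dsent :=
  {| rule := fun q B => dag_rule_i q B \/ dag_rule_ii q B;
     assm := [set c : dsent | if c is inl _ then true else false];
     contrary := fun c => match c with inl a => inr a | inr a => inr a end |}.

End Dag.

(* A stable extension attacks every assumption outside it, so it is complete and
   has no conflict-free proper superset; hence it is preferred.  Conversely, let S
   be preferred and a an assumption outside S, lying in the triple
   {arr_xy, arr_yx, noe_xy}.  If S contains another member b of the triple, rule (i)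
   gives {b} |- contrary a.  Otherwise S + noe_xy is still admissible: only arr_xy
   and arr_yx derive the contrary of noe_xy, noe_xy derives theirs in return, and
   noe_xy occurs in no cycle rule.  As every admissible set extends to a complete
   one, this contradicts the maximality of S. *)

From mathcomp Require Import all_boot.
From Stdlib Require Import Classical.
Set Implicit Arguments. Unset Strict Implicit. Unset Printing Implicit Defensive.

Section ABATheory.
Variables (L : finType) (D : ABAF L).

Lemma attacks_monol (S1 S2 T : {set L}) :
  S1 \subset S2 -> attacks D S1 T -> attacks D S2 T.
Proof.
move=> sS12 [S' sS'S1 atk]; exists S' => //; exact: subset_trans sS12.
Qed.

Lemma attacks_monor (S T1 T2 : {set L}) :
  T1 \subset T2 -> attacks D S T1 -> attacks D S T2.
Proof.
move=> sT12 [S' sS'S [a aT1 d]]; exists S' => //; exists a => //.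
exact: (subsetP sT12).
Qed.

Section Stable.
Variable S : {set L}.
Hypothesis stS : stable D S.

Lemma stable_complete : complete D S.
Proof.
have [[SA cfS dS] attS] := stS; split=> // T TA dT.
apply/subsetP => t tT; apply/negPn/negP => tS.
have [S' sS'S [_ /set1P -> d]] := attS t (subsetP TA t tT) tS.
have /(dT S' (subset_trans sS'S SA)) : attacks D S' T by exists S' => //; exists t.
by move=> /(attacks_monor sS'S).
Qed.

Lemma stable_conflict_free_max (T : {set L}) :
  T \subset assm D -> conflict_free D T -> S \subset T -> T \subset S.
Proof.
move=> TA cfT sST; apply/subsetP => t tT; apply/negPn/negP => tS.
apply: cfT; apply: (attacks_monor (T1 := [set t])); first by rewrite sub1set.
exact: attacks_monol sST (stS.2 t (subsetP TA t tT) tS).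
Qed.

Lemma stable_preferred : preferred D S.
Proof.
split; first exact: stable_complete.
move=> T [[TA cfT _] _] sST; apply/eqP; rewrite eqEsubset sST andbT.
exact: stable_conflict_free_max.
Qed.

End Stable.

Lemma admissibleU (M T : {set L}) :
  admissible D M -> T \subset assm D -> defends D M T -> admissible D (M :|: T).
Proof.
move=> [MA cfM dM] TA dT.
have MTA : M :|: T \subset assm D by rewrite subUset MA TA.
have dMU : defends D M (M :|: T).
  move=> U UA [U' sU'U [a /setUP [aM | aT] d]].
  - by apply: dM => //; exists U' => //; exists a.
  - by apply: dT => //; exists U' => //; exists a.
split=> //.
- move=> /(dMU _ MTA) [U' sU'M [a /setUP [aM | aT] d]]; apply: cfM.
  + by exists U' => //; exists a.
  + by apply: (dT M MA); exists U' => //; exists a.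
- by move=> U UA /(dMU U UA); apply: attacks_monol (subsetUl M T).
Qed.

Lemma admissible_sub_complete (M : {set L}) :
  admissible D M -> exists2 M', complete D M' & M \subset M'.
Proof.
have [k] := ubnP #|~: M|; elim: k M => // k IH M ltMk admM.
have [maxM | nmaxM] :=
  classic (forall T : {set L}, T \subset assm D -> defends D M T -> T \subset M).
  by exists M.
have [T TA [dT nsTM]] : exists2 T : {set L}, T \subset assm D &
    defends D M T /\ ~ T \subset M.
  apply: NNPP => noT; apply: nmaxM => T TA dT; apply: NNPP => nsTM.
  by apply: noT; exists T.
have ltMMT : M \proper M :|: T.
  rewrite properE subsetUl /=; apply/negP => sMTM; apply: nsTM.
  exact: subset_trans (subsetUr M T) sMTM.
have [|M' cM' sMTM'] := IH (M :|: T) _ (admissibleU admM TA dT).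
  by rewrite -ltnS (leq_trans _ ltMk) // ltnS proper_card // properC.
by exists M' => //; apply: subset_trans (subsetUl M T) sMTM'.
Qed.

Lemma preferred_max (S T : {set L}) :
  preferred D S -> admissible D T -> S \subset T -> T \subset S.
Proof.
move=> [_ maxS] admT sST; have [M cM sTM] := admissible_sub_complete admT.
by rewrite -(maxS M cM (subset_trans sST sTM)).
Qed.

End ABATheory.

Section Dag.
Variable V : finType.
Notation D := (Ddag V).

Definition atom_pair (a : datom V) : {set V} :=
  match val a with inl (u, v) => [set u; v] | inr s => s end.

Lemma in_triple_pair x y a : in_triple x y a -> atom_pair a = [set x; y].
Proof. by rewrite /atom_pair; case=> [-> | [-> | ->]] //; rewrite setUC. Qed.

Lemma pair_in_triple x y a :
  x != y -> atom_pair a = [set x; y] -> in_triple x y a.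
Proof.
move=> nxy; case: a => [[[u v] | s] nuv]; rewrite /atom_pair /in_triple /= => epair;
  last first.
  by rewrite -epair; right; right.
have /set2P [ux | uy] : u \in [set x; y] by rewrite -epair set21.
- have /set2P [vx | ->] : v \in [set x; y] by rewrite -epair set22.
    by move: nuv; rewrite /= ux vx eqxx.
  by left; rewrite ux.
- have /set2P [-> | vy] : v \in [set x; y] by rewrite -epair set22.
    by right; left; rewrite uy.
  by move: nuv; rewrite /= uy vy eqxx.
Qed.

Lemma atom_in_triple (a : datom V) : exists x y : V, x != y /\ in_triple x y a.
Proof.
case: a => [[[u v] | s] ok]; first by exists u, v; split=> //; left.
have [x [y [nxy es]]] := cards2P _ ok.
by exists x, y; split=> //; right; right; rewrite /= es.
Qed.

Lemma noe_ok (x y : V) :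
  x != y -> dag_atom_ok (inr [set x; y] : (V * V) + {set V}).
Proof. by move=> nxy; rewrite /= cards2 nxy. Qed.

Definition noe x y (nxy : x != y) : datom V := exist _ (inr [set x; y]) (noe_ok nxy).

Lemma noe_in_triple x y (nxy : x != y) : in_triple x y (noe nxy).
Proof. by right; right. Qed.

Lemma dag_rule_head q B : rule D q B -> exists a, q = inr a.
Proof.
by case=> [[x [y [a [b [_ [-> _]]]]]] | [x [t [i [a [[_ _ _ _ ->] _]]]]]];
  exists a.
Qed.

Lemma dag_rule_body q B b : rule D q B -> b \in B -> exists a, b = inl a.
Proof.
case=> [[x [y [a [b' [_ [_ ->]]]]]] /set1P -> |
        [x [t [i [a [_ inB]]]]] /inB [j [_ [a' [-> _]]]]];
  by eexists.
Qed.

(* Heads of rules are contraries and bodies are assumptions, so every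
   derivation has depth at most one. *)
Lemma dtree_flat q U :
  dtree D q U -> (exists a, q = inl a) /\ U = [set q] \/ rule D q U.
Proof.
elim=> [a | q' B U' r _ IH].
  by rewrite inE; case: a => // a _; left; split=> //; exists a.
right; suff -> : \bigcup_(b in B) U' b = B by [].
have U'E b : b \in B -> U' b = [set b].
  move=> bB; case: (IH _ bB) => [[_ //] | /dag_rule_head [a' ea']].
  by have [a ea] := dag_rule_body r bB; rewrite ea' in ea.
apply/setP => c; apply/bigcupP/idP => [[b bB] | cB].
  by rewrite U'E // => /set1P ->.
by exists c; rewrite ?U'E ?set11.
Qed.

Lemma derives_contrary U a : derives D U (inr a) -> rule D (inr a) U.
Proof. by case/dtree_flat => // -[[b]]. Qed.

Lemma derives_in_triple x y (a b : datom V) :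
  x != y -> in_triple x y a -> in_triple x y b -> a != b ->
  derives D [set inl b] (inr a).
Proof.
move=> nxy ia ib nab.
have r : rule D (inr a) [set inl b] by left; exists x, y, a, b.
have := DNode (U := fun c => [set c]) r; rewrite big_set1; apply=> _ /set1P ->.
by apply: DLeaf; rewrite inE.
Qed.

Section Noe.
Variables (x y : V) (nxy : x != y).
Local Notation n := (noe nxy).

Lemma rule_contrary_noe U :
  rule D (inr n) U -> exists2 b, U = [set inl b] & in_triple x y b /\ b != n.
Proof.
case=> [[x' [y' [a [b [[_ ia ib nab] [[ea] ->]]]]]] |
        [? [? [? [a [[_ _ _ va [ea]]] _]]]]]; subst a => //.
exists b => //; split; last by rewrite eq_sym.
by apply: pair_in_triple => //; rewrite (in_triple_pair ib) -(in_triple_pair ia).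
Qed.

Lemma rule_noe_body g U :
  rule D (inr g) U -> inl n \in U -> in_triple x y g /\ g != n.
Proof.
case=> [[x' [y' [a [b [[_ ia ib nab] [[ea] ->]]]]]] /set1P [eb] |
        [? [? [? [? [_ inU]]]]] /inU [? [_ [a' [[ea] va]]]]]; subst => //.
split=> //; apply: pair_in_triple => //.
by rewrite (in_triple_pair ia) -(in_triple_pair ib).
Qed.

Section Extension.
Variable S : {set dsent V}.
Hypotheses (admS : admissible D S)
  (S_avoids : forall b, inl b \in S -> ~ in_triple x y b).
Local Notation S' := (inl n |: S).

Lemma noe_extension_sub_assm : S' \subset assm D.
Proof. by rewrite subUset sub1set inE andTb; case: admS. Qed.

Lemma noe_extension_conflict_free : conflict_free D S'.
Proof.
have [_ cfS _] := admS.
move=> [U sUS' [c cS']]; case: c cS' => [g | g] gS' d;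
  last by move: (subsetP noe_extension_sub_assm _ gS'); rewrite inE.
have r := derives_contrary d.
have [nU | nU] := boolP (inl n \in U).
  have [tg ngn] := rule_noe_body r nU.
  move: gS'; rewrite in_setU1 => /predU1P [[egn] | /S_avoids //].
  by rewrite egn eqxx in ngn.
have sUS : U \subset S.
  apply/subsetP => u uU; move: (subsetP sUS' _ uU); rewrite in_setU1.
  by case/predU1P => // eu; rewrite -eu uU in nU.
move: gS'; rewrite in_setU1 => /predU1P [[eg] | gS].
  rewrite eg in r; have [b eU [tb _]] := rule_contrary_noe r.
  by apply: (S_avoids (b := b)) => //; apply: (subsetP sUS); rewrite eU set11.
by apply: cfS; exists U => //; exists (inl g).
Qed.

Lemma noe_extension_defends : defends D S' S'.
Proof.
have [_ _ dS] := admS.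
move=> U UA [U' sU'U [c cS' d]].
move: cS'; rewrite in_setU1 => /predU1P [ec | cS].
  rewrite ec in d; have [b eU' [tb nbn]] := rule_contrary_noe (derives_contrary d).
  exists [set inl n]; first by rewrite sub1set setU11.
  exists (inl b); first by apply: (subsetP sU'U); rewrite eU' set11.
  exact: derives_in_triple nxy tb (noe_in_triple nxy) nbn.
apply: attacks_monol (subsetUr _ _) _; apply: dS => //.
by exists U' => //; exists c.
Qed.

Lemma noe_extension_admissible : admissible D S'.
Proof.
split; [exact: noe_extension_sub_assm | exact: noe_extension_conflict_free |
        exact: noe_extension_defends].
Qed.

End Extension.

End Noe.

Lemma preferred_meets_triple S x y :
  preferred D S -> x != y -> exists2 b, inl b \in S & in_triple x y b.
Proof.
move=> prefS nxy; apply: NNPP => noB.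
have avoid b : inl b \in S -> ~ in_triple x y b by move=> bS tb; apply: noB; exists b.
have [[admS _] _] := prefS.
have := preferred_max prefS (noe_extension_admissible nxy admS avoid) (subsetUr _ _).
by move=> /subsetP /(_ _ (setU11 _ _)) /avoid; apply; apply: noe_in_triple.
Qed.

Lemma preferred_stable S : preferred D S -> stable D S.
Proof.
move=> prefS; have [[admS _] _] := prefS; split=> // -[g _ gS | g]; last by rewrite inE.
have [x [y [nxy tg]]] := atom_in_triple g.
have [b bS tb] := preferred_meets_triple prefS nxy.
have ngb : g != b by apply: contraNneq gS => ->.
exists [set inl b]; first by rewrite sub1set.
by exists (inl g); [exact: set11 | exact: derives_in_triple nxy tg tb ngb].
Qed.

End Dag.

Theorem lemma1 (V : finType) (S : {set dsent V}) :
  preferred (Ddag V) S <-> stable (Ddag V) S.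
Proof. by split; [exact: preferred_stable | exact: stable_preferred]. Qed.
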